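(* Let $\{|1\rangle,|2\rangle,|3\rangle\}$ be the standard basis of $\mathbb{C}^3$. For $i\in\{1,2,3\}$ let $X^{(i)},Y^{(i)},Z^{(i)}$ be the operators on $\mathbb{C}^3$ acting as the Pauli matrices $X,Y,Z$ on the two-dimensional subspace spanned by $\{|k\rangle:k\neq i\}$ (with respect to the two remaining basis vectors in increasing order) and as $0$ on $|i\rangle$. Then every separable state $\rho$ on $\mathbb{C}^3\otimes\mathbb{C}^3$ satisfies $$\sum_{i,j=1}^3\Big(|\operatorname{tr}(\rho\,X^{(i)}\otimes X^{(j)})|+|\operatorname{tr}(\rho\,Y^{(i)}\otimes Y^{(j)})|+|\operatorname{tr}(\rho\,Z^{(i)}\otimes Z^{(j)})|\Big)\le4.$$
   Context: A state on $\mathbb{C}^3\otimes\mathbb{C}^3$ is separable if it is a convex combination of product states $\rho_A\otimes\rho_B$. *)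

(* Complex scalars: an arbitrary numClosedFieldType C
   (e.g. C = R[i] for a real closed field R; covers the usual complex numbers). *)
From mathcomp Require Import all_boot all_order all_algebra.
From mathcomp Require Import mxtens.
Set Implicit Arguments. Unset Strict Implicit. Unset Printing Implicit Defensive.
Import Order.TTheory GRing.Theory Num.Theory.
Local Open Scope ring_scope.

Section QDefs.
Variable C : numClosedFieldType.

Definition adjmx {m n} (A : 'M[C]_(m, n)) : 'M[C]_(n, m) := (map_mx Num.conj A)^T.

(* positive semidefinite: <v, A v> >= 0 for all v (this forces A Hermitian over C) *)
Definition psd {n} (A : 'M[C]_n) : Prop :=
  forall v : 'cV[C]_n, 0 <= (adjmx v *m A *m v) 0 0.

Definition is_state {n} (rho : 'M[C]_n) : Prop := psd rho /\ \tr rho = 1.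

Definition separable {m n} (rho : 'M[C]_(m * n)) : Prop :=
  exists (N : nat) (p : 'I_N -> C) (rA : 'I_N -> 'M[C]_m) (rB : 'I_N -> 'M[C]_n),
    (forall k, 0 <= p k) /\ \sum_(k < N) p k = 1 /\
    (forall k, is_state (rA k)) /\ (forall k, is_state (rB k)) /\
    rho = \sum_(k < N) p k *: tensmx (rA k) (rB k).

Definition pauliX : 'M[C]_2 := \matrix_(r, c) (if r == c then 0 else 1).
Definition pauliY : 'M[C]_2 :=
  \matrix_(r, c) (if r == c then 0 else if (r == 0 :> nat) then - 'i else 'i).
Definition pauliZ : 'M[C]_2 :=
  \matrix_(r, c) (if r == c then (if (r == 0 :> nat) then 1 else -1) else 0).

(* Basis indices are 0,1,2 (paper's 1,2,3). The position of k <> i among the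
   remaining two indices is k - (i < k). *)
Definition embed (i : 'I_3) (P : 'M[C]_2) : 'M[C]_3 :=
  \matrix_(r, c) (if (r == i) || (c == i) then 0
                  else P (inord (r - (i < r))) (inord (c - (i < c)))).

Definition Xop i := embed i pauliX.
Definition Yop i := embed i pauliY.
Definition Zop i := embed i pauliZ.

End QDefs.

From mathcomp Require Import all_boot all_order all_algebra.
From mathcomp Require Import mxtens ring.
Import Order.TTheory GRing.Theory Num.Theory.
Local Open Scope ring_scope.

(* Write S_P(M) for sum_i |tr (M P^(i))| and s_j for the square root of the
   j-th diagonal entry of a state M. The 2x2 principal minors of M give
   |tr (M X^(i))|^2 + |tr (M Y^(i))|^2 = 4 |M_jk|^2 <= (2 s_j s_k)^2 where
   {j, k} is the complement of i, and tr (M Z^(i)) = s_j^2 - s_k^2. By the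
   triangle inequality in the plane, S_X^2 + S_Y^2 + S_Z^2 is then bounded by
   an elementary inequality in s_0, s_1, s_2, which with tr M = 1 gives 4.
   For a product state the correlation sum factors as
   S_X(A) S_X(B) + S_Y(A) S_Y(B) + S_Z(A) S_Z(B) <= 4 (by 2xy <= x^2 + y^2),
   and the bound passes to convex combinations by the triangle inequality. *)

Section PsdForm2.
Context {C : numClosedFieldType} {a d p q : C}.
Hypothesis form_ge0 :
  forall x y, 0 <= x^* * x * a + x^* * y * p + y^* * x * q + y^* * y * d.

Lemma form2_ge0_l : 0 <= a.
Proof. by have := form_ge0 1 0; rewrite conjC1 conjC0 !(mul1r, mul0r, addr0). Qed.

Lemma form2_ge0_r : 0 <= d.
Proof. by have := form_ge0 0 1; rewrite conjC1 conjC0 !(mul1r, mul0r, add0r). Qed.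

(* The form is real at (1, 1) and at (1, 'i), which forces q = conj p. *)
Lemma form2_herm : q = p^*.
Proof.
have /geC0_conj h11 := form_ge0 1 1.
have /geC0_conj h1i := form_ge0 1 'i.
rewrite conjC1 !mul1r in h11; rewrite conjC1 conjCi !(mul1r, mulr1) in h1i.
rewrite !rmorphD /= (geC0_conj form2_ge0_l) (geC0_conj form2_ge0_r) in h11.
rewrite !rmorphD !rmorphM !rmorphN /= conjCi in h1i.
rewrite (geC0_conj form2_ge0_l) (geC0_conj form2_ge0_r) in h1i.
have k1 : p + q - p^* - q^* = 0.
  by transitivity ((a + p + q + d) - (a + p^* + q^* + d)); [ring | rewrite h11 subrr].
have : 'i * (p - q + p^* - q^*) = 0.
  transitivity ((a + 'i * p + - 'i * q + - 'i * 'i * d) -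
                (a + - 'i * p^* + - - 'i * q^* + - - 'i * - 'i * d)); first ring.
  by rewrite h1i subrr.
move/eqP; rewrite mulf_eq0 (negPf (neq0Ci C)) /= => /eqP k2.
have : 2 * (q - p^*) = 0.
  by transitivity ((p + q - p^* - q^*) - (p - q + p^* - q^*)); [ring | rewrite k1 k2 subrr].
by move/eqP; rewrite mulf_eq0 pnatr_eq0 subr_eq0 => /eqP.
Qed.

(* Test vectors (d, - conj p) and, when d = 0, (|p|^2, - (a + 1) conj p). *)
Lemma form2_det : p * p^* <= a * d.
Proof.
have ha := form2_ge0_l; have hd := form2_ge0_r.
have H := form_ge0; rewrite form2_herm in H.
have hN := mul_conjC_ge0 p; set N := p * p^* in hN *.
have [d0 | dn0] := eqVneq d 0.
  have := H N (- (a + 1) * p^*).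
  rewrite d0 !mulr0 addr0 (geC0_conj hN) !rmorphM !rmorphN /= conjCK.
  rewrite (geC0_conj (addr_ge0 ha ler01)).
  have -> : N * N * a + N * (- (a + 1) * p^*) * p + - (a + 1) * p * N * p^* =
    - (N ^+ 2 * (a + 2)) by rewrite /N; ring.
  rewrite oppr_ge0 pmulr_lle0 ?ltr_wpDl // => hN2.
  have : N ^+ 2 == 0 by rewrite eq_le hN2 exprn_ge0.
  by rewrite expf_eq0 /= => /eqP ->.
have := H d (- p^*).
rewrite (geC0_conj hd) !rmorphN /= conjCK.
have -> : d * d * a + d * - p^* * p + - p * d * p^* + - p * - p^* * d =
  d * (a * d - N) by rewrite /N; ring.
by rewrite pmulr_rge0 ?lt_def ?dn0 // subr_ge0.
Qed.
End PsdForm2.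

Section Psd.
Context {C : numClosedFieldType}.

Lemma adjmx_delta_comb n (j k : 'I_n) (x y : C) :
  adjmx (x *: delta_mx j 0 + y *: delta_mx k 0) =
  x^* *: delta_mx 0 j + y^* *: delta_mx 0 k :> 'rV_n.
Proof.
apply/matrixP => a b; rewrite !mxE !ord1 eqxx /= !andbT.
by rewrite rmorphD !rmorphM /= !conjC_nat.
Qed.

Lemma delta_quad_entry n (A : 'M[C]_n) (j k : 'I_n) (a b : C) :
  ((a *: delta_mx 0 j : 'rV_n) *m A *m (b *: delta_mx k 0 : 'cV_n)) 0 0 = a * b * A j k.
Proof. by rewrite -scalemxAl -scalemxAr -scalemxAl -rowE -colE !mxE mulrCA mulrA. Qed.

Lemma psd_form2 {n} {A : 'M[C]_n} (j k : 'I_n) : psd A -> forall x y : C,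
  0 <= x^* * x * A j j + x^* * y * A j k + y^* * x * A k j + y^* * y * A k k.
Proof.
move=> hA x y; have := hA (x *: delta_mx j 0 + y *: delta_mx k 0).
rewrite adjmx_delta_comb !(mulmxDl, mulmxDr) ![((_ + _ : 'M_1) 0 0)]mxE.
by rewrite !delta_quad_entry addrACA !addrA.
Qed.
End Psd.

Section NonnegInequalities.
Context {R : numDomainType}.
Implicit Types a b c u w m : R.

Lemma sqrB_ge0 {a b} : 0 <= a -> 0 <= b -> 0 <= (a - b) ^+ 2.
Proof. by move=> ha hb; rewrite -realEsqr rpredB ?ger0_real. Qed.

Lemma cauchy_schwarz2 {u w u' w' m m'} :
  0 <= u -> 0 <= w -> 0 <= u' -> 0 <= w' -> 0 <= m -> 0 <= m' ->
  u ^+ 2 + w ^+ 2 <= m ^+ 2 -> u' ^+ 2 + w' ^+ 2 <= m' ^+ 2 ->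
  u * u' + w * w' <= m * m'.
Proof.
move=> hu hw hu' hw' hm hm' h h'.
rewrite -ler_sqr ?nnegrE ?addr_ge0 ?mulr_ge0 //.
apply: (@le_trans _ _ ((u ^+ 2 + w ^+ 2) * (u' ^+ 2 + w' ^+ 2))).
  rewrite -subr_ge0.
  have -> : (u ^+ 2 + w ^+ 2) * (u' ^+ 2 + w' ^+ 2) - (u * u' + w * w') ^+ 2 =
            (u * w' - w * u') ^+ 2 by ring.
  by rewrite sqrB_ge0 ?mulr_ge0.
by rewrite exprMn ler_pM ?addr_ge0 ?exprn_ge0.
Qed.

Definition in_disc u w m := [/\ 0 <= u, 0 <= w, 0 <= m & u ^+ 2 + w ^+ 2 <= m ^+ 2].

Lemma in_discD {u w m u' w' m'} :
  in_disc u w m -> in_disc u' w' m' -> in_disc (u + u') (w + w') (m + m').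
Proof.
move=> [hu hw hm h] [hu' hw' hm' h']; split; rewrite ?addr_ge0 //.
have cs : u * u' + w * w' <= m * m' by exact: cauchy_schwarz2.
have -> : (u + u') ^+ 2 + (w + w') ^+ 2 =
  (u ^+ 2 + w ^+ 2) + (u' ^+ 2 + w' ^+ 2) + 2 * (u * u' + w * w') by ring.
have -> : (m + m') ^+ 2 = m ^+ 2 + m' ^+ 2 + 2 * (m * m') by ring.
by rewrite !lerD // ler_wpM2l.
Qed.

Lemma in_disc_sum {I : finType} {u w m : I -> R} :
  (forall i, in_disc (u i) (w i) (m i)) ->
  in_disc (\sum_i u i) (\sum_i w i) (\sum_i m i).
Proof.
move=> h; apply: (big_ind3 in_disc) => //; last exact: @in_discD.
by split; rewrite ?expr0n ?addr0.
Qed.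

Lemma dot3_le {a1 a2 a3 b1 b2 b3 c} :
  0 <= a1 -> 0 <= a2 -> 0 <= a3 -> 0 <= b1 -> 0 <= b2 -> 0 <= b3 ->
  a1 ^+ 2 + a2 ^+ 2 + a3 ^+ 2 <= c -> b1 ^+ 2 + b2 ^+ 2 + b3 ^+ 2 <= c ->
  a1 * b1 + a2 * b2 + a3 * b3 <= c.
Proof.
move=> ha1 ha2 ha3 hb1 hb2 hb3 ha hb.
rewrite -(ler_pM2l (ltr0n R 2)).
have -> : 2 * (a1 * b1 + a2 * b2 + a3 * b3) =
  (a1 ^+ 2 + a2 ^+ 2 + a3 ^+ 2) + (b1 ^+ 2 + b2 ^+ 2 + b3 ^+ 2)
  - ((a1 - b1) ^+ 2 + (a2 - b2) ^+ 2 + (a3 - b3) ^+ 2) by ring.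
rewrite lerBlDr; apply: ler_wpDr; first by rewrite !addr_ge0 ?sqrB_ge0.
by rewrite mulrDl mul1r lerD.
Qed.

(* For a, b, c the square roots of the diagonal of a state M, the left side
   bounds S_X^2 + S_Y^2 + S_Z^2 and the right side is 4 (tr M)^2. *)
Definition diag_ineq a b c :=
  (2 * b * c + 2 * a * c + 2 * a * b) ^+ 2
  + (`|b ^+ 2 - c ^+ 2| + `|a ^+ 2 - c ^+ 2| + `|a ^+ 2 - b ^+ 2|) ^+ 2
  <= 4 * (a ^+ 2 + b ^+ 2 + c ^+ 2) ^+ 2.

Lemma diag_ineq_sorted {a b c} : 0 <= c -> c <= b -> b <= a -> diag_ineq a b c.
Proof.
move=> hc hcb hba; have hb := le_trans hc hcb.
have sqr_le (x y : R) : 0 <= x -> x <= y -> `|y ^+ 2 - x ^+ 2| = y ^+ 2 - x ^+ 2.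
  move=> hx hxy; have hy := le_trans hx hxy.
  by rewrite ger0_norm // subr_ge0 ler_sqr.
have hca := le_trans hcb hba.
rewrite /diag_ineq !sqr_le // -subr_ge0.
move: hba hcb; rewrite -[b <= a]subr_ge0 -[c <= b]subr_ge0.
set x := a - b; set y := b - c => hx hy.
have ea : a = c + y + x by rewrite /x /y; ring.
have eb : b = c + y by rewrite /y; ring.
clearbody x y; subst a b.
(* In the gaps x, y and the minimum c, the difference has only nonnegative terms. *)
set lhs := (X in 0 <= X).
have -> : lhs = 4 * (c ^+ 2 * (x ^+ 2 + y ^+ 2 + (x - y) ^+ 2) + 4 * y ^+ 3 * c
                     + 2 * y ^+ 4 + 2 * x * y ^+ 3 + x ^+ 2 * y ^+ 2) by rewrite /lhs; ring.
by rewrite !(sqrB_ge0, mulr_ge0, addr_ge0, exprn_ge0) ?ler0n.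
Qed.

Lemma diag_ineqC12 a b c : diag_ineq b a c = diag_ineq a b c.
Proof. by rewrite /diag_ineq (distrC (b ^+ 2) (a ^+ 2)); congr (_ <= _); ring. Qed.

Lemma diag_ineqC23 a b c : diag_ineq a c b = diag_ineq a b c.
Proof. by rewrite /diag_ineq (distrC (c ^+ 2) (b ^+ 2)); congr (_ <= _); ring. Qed.

Lemma diag_ineq_ge0 {a b c} : 0 <= a -> 0 <= b -> 0 <= c -> diag_ineq a b c.
Proof.
move=> ha hb hc.
have leVge (x y : R) : 0 <= x -> 0 <= y -> (x <= y) || (y <= x).
  by move=> hx hy; rewrite real_leVge ?ger0_real.
wlog hba : a b ha hb / b <= a.
  move=> sorted; case/orP: (leVge a b ha hb) => h; last exact: sorted.
  by rewrite -diag_ineqC12; apply: sorted.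
case/orP: (leVge c b hc hb) => hcb; first exact: diag_ineq_sorted.
rewrite -diag_ineqC23; case/orP: (leVge c a hc ha) => hca.
  exact: diag_ineq_sorted.
by rewrite -diag_ineqC12; apply: diag_ineq_sorted.
Qed.
End NonnegInequalities.

Section PauliTraces.
Variable C : numClosedFieldType.

Definition o0 : 'I_3 := @Ordinal 3 0 isT.
Definition o1 : 'I_3 := @Ordinal 3 1 isT.
Definition o2 : 'I_3 := @Ordinal 3 2 isT.

Lemma ord3P (i : 'I_3) : [\/ i = o0, i = o1 | i = o2].
Proof.
by case: i => [[|[|[|//]]] ?]; [constructor 1 | constructor 2 | constructor 3];
  apply: val_inj.
Qed.

Lemma sum_ord3 (F : 'I_3 -> C) : \sum_(i < 3) F i = F o0 + F o1 + F o2.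
Proof.
rewrite !big_ord_recl big_ord0 addr0 addrA.
by congr (_ + _ + _); apply: congr1; apply: val_inj.
Qed.

Definition lo (i : 'I_3) : 'I_3 := if i == o0 then o1 else o0.
Definition hi (i : 'I_3) : 'I_3 := if i == o2 then o1 else o2.

Lemma mxtrace_mul_embed (M : 'M[C]_3) (P : 'M[C]_2) (i : 'I_3) :
  \tr (M *m embed i P) = P 0 0 * M (lo i) (lo i) + P 0 1 * M (hi i) (lo i)
                       + P 1 0 * M (lo i) (hi i) + P 1 1 * M (hi i) (hi i).
Proof.
have e0 : inord 0 = 0 :> 'I_2 by apply: val_inj; rewrite /= inordK.
have e1 : inord 1 = 1 :> 'I_2 by apply: val_inj; rewrite /= inordK.
rewrite /mxtrace sum_ord3 !mxE !sum_ord3 /embed !mxE.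
have [->|->|->] := ord3P i; rewrite /lo /hi /= ?e0 ?e1 /=; ring.
Qed.

Lemma mxtrace_mul_Xop (M : 'M[C]_3) i :
  \tr (M *m Xop C i) = M (lo i) (hi i) + M (hi i) (lo i).
Proof. by rewrite mxtrace_mul_embed /pauliX !mxE /=; ring. Qed.

Lemma mxtrace_mul_Yop (M : 'M[C]_3) i :
  \tr (M *m Yop C i) = 'i * M (lo i) (hi i) - 'i * M (hi i) (lo i).
Proof. by rewrite mxtrace_mul_embed /pauliY !mxE /=; ring. Qed.

Lemma mxtrace_mul_Zop (M : 'M[C]_3) i :
  \tr (M *m Zop C i) = M (lo i) (lo i) - M (hi i) (hi i).
Proof. by rewrite mxtrace_mul_embed /pauliZ !mxE /=; ring. Qed.
End PauliTraces.

Section StateBound.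
Context {C : numClosedFieldType}.

Definition abs_expect_sum {n r} (P : 'I_r -> 'M[C]_n) (M : 'M[C]_n) :=
  \sum_(i < r) `|\tr (M *m P i)|.

Lemma sqr_norm_reim (p : C) :
  `|p + p^*| ^+ 2 + `|'i * p - 'i * p^*| ^+ 2 = 4 * (p * p^*).
Proof.
rewrite !normCK !rmorphD !rmorphN !rmorphM /= conjCK conjCi.
transitivity (4 * (p * p^*) + ('i * 'i + 1) * (p - p^*) ^+ 2); first ring.
by rewrite mulCii addNr mul0r addr0.
Qed.

Lemma state_pauli_bound (M : 'M[C]_3) : is_state M ->
  abs_expect_sum (Xop C) M ^+ 2 + abs_expect_sum (Yop C) M ^+ 2
  + abs_expect_sum (Zop C) M ^+ 2 <= 4.
Proof.
case=> hpsd htr.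
pose s j := sqrtC (M j j).
have s_ge0 j : 0 <= s j by rewrite sqrtC_ge0 (form2_ge0_l (psd_form2 j j hpsd)).
have disc i : in_disc `|\tr (M *m Xop C i)| `|\tr (M *m Yop C i)|
                      (2 * s (lo i) * s (hi i)).
  have hform := psd_form2 (lo i) (hi i) hpsd.
  split; rewrite ?normr_ge0 ?mulr_ge0 ?ler0n //.
  rewrite mxtrace_mul_Xop mxtrace_mul_Yop (form2_herm hform) sqr_norm_reim.
  rewrite !exprMn !sqrtCK -natrX -mulrA ler_wpM2l ?ler0n //.
  exact: form2_det hform.
have [_ _ _ hXY] := in_disc_sum disc.
have := diag_ineq_ge0 (s_ge0 o0) (s_ge0 o1) (s_ge0 o2).
have tr3 : M o0 o0 + M o1 o1 + M o2 o2 = 1 by rewrite -htr /mxtrace sum_ord3.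
rewrite /diag_ineq /s !sqrtCK tr3 expr1n mulr1; apply: le_trans.
rewrite [abs_expect_sum (Zop C) M]/abs_expect_sum sum_ord3 !mxtrace_mul_Zop.
rewrite [in X in _ <= X]sum_ord3 /lo /hi /= in hXY.
by rewrite /lo /hi /= lerD.
Qed.
End StateBound.

Section Separable.
Context {C : numClosedFieldType}.

Lemma abs_expect_sum_ge0 n r (P : 'I_r -> 'M[C]_n) (M : 'M[C]_n) : 0 <= abs_expect_sum P M.
Proof. by apply: sumr_ge0 => i _; apply: normr_ge0. Qed.

Lemma mxtrace_tensmx m n (A : 'M[C]_m) (B : 'M[C]_n) : \tr (A *t B) = \tr A * \tr B.
Proof. by rewrite /mxtrace mxtens.mulr_sum; apply: eq_bigr => i _; rewrite mxE. Qed.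

Context {m n N : nat} {p : 'I_N -> C}.
Variables (rA : 'I_N -> 'M[C]_m) (rB : 'I_N -> 'M[C]_n).
Hypothesis p_ge0 : forall k, 0 <= p k.
Let rho := \sum_(k < N) p k *: tensmx (rA k) (rB k).

Lemma abs_expect_mixture_tens (P : 'M[C]_m) (Q : 'M[C]_n) :
  `|\tr (rho *m tensmx P Q)|
    <= \sum_(k < N) p k * (`|\tr (rA k *m P)| * `|\tr (rB k *m Q)|).
Proof.
rewrite mulmx_suml raddf_sum /=.
apply: le_trans (ler_norm_sum _ _ _) _; apply: ler_sum => k _.
by rewrite -scalemxAl mxtraceZ tensmx_mul mxtrace_tensmx !normrM (ger0_norm (p_ge0 k)).
Qed.

Lemma corr_sum_mixture_tens {r} (P : 'I_r -> 'M[C]_m) (Q : 'I_r -> 'M[C]_n) :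
  \sum_(i < r) \sum_(j < r) `|\tr (rho *m tensmx (P i) (Q j))|
    <= \sum_(k < N) p k * (abs_expect_sum P (rA k) * abs_expect_sum Q (rB k)).
Proof.
have -> : \sum_(k < N) p k * (abs_expect_sum P (rA k) * abs_expect_sum Q (rB k)) =
    \sum_(i < r) \sum_(j < r) \sum_(k < N)
      p k * (`|\tr (rA k *m P i)| * `|\tr (rB k *m Q j)|).
  under eq_bigr do rewrite big_distrlr mulr_sumr.
  under eq_bigr do under eq_bigr do rewrite mulr_sumr.
  by rewrite exchange_big; apply: eq_bigr => i _; rewrite exchange_big.
by apply: ler_sum => i _; apply: ler_sum => j _; apply: abs_expect_mixture_tens.
Qed.
End Separable.

Theorem mainTheorem17 (C : numClosedFieldType) (rho : 'M[C]_(3 * 3)) :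
  separable rho ->
  \sum_(i < 3) \sum_(j < 3)
     (`| \tr (rho *m tensmx (Xop C i) (Xop C j)) |
      + `| \tr (rho *m tensmx (Yop C i) (Yop C j)) |
      + `| \tr (rho *m tensmx (Zop C i) (Zop C j)) |) <= 4.
Proof.
move=> [N [p [rA [rB [p_ge0 [p_sum1 [stateA [stateB ->]]]]]]]].
under eq_bigr do rewrite !big_split; rewrite !big_split /=.
have corr := corr_sum_mixture_tens rA rB p_ge0.
apply: le_trans (lerD (lerD (corr _ (Xop C) (Xop C)) (corr _ (Yop C) (Yop C)))
                       (corr _ (Zop C) (Zop C))) _.
rewrite -!big_split /= -[leRHS]mul1r -{1}p_sum1 mulr_suml.
apply: ler_sum => k _; rewrite -!mulrDr ler_wpM2l //.
by apply: dot3_le; rewrite ?abs_expect_sum_ge0 //; apply: state_pauli_bound.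
Qed.
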